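(* Let $\Lambda=(0,\infty)$ and let $\chi\colon\Lambda\to\mathbb{R}^3_+$ be continuous, bounded, with $\operatorname{supp}\chi=[0,1]$ and $\chi(\lambda)\ne\mathbf{0}$ on $(0,1)$; let $\eta=\chi/\langle\mathbf{1},\chi\rangle$ on $(0,1)$, extended continuously to $[0,1]$. Let $\mathcal{P}=\{\int\chi\,\mathrm{d}\nu:\nu$ finite nonnegative Borel measure on $\Lambda\}$ with nonempty interior, $A=\{\mathbf{x}\in\mathbb{R}^3:\langle\mathbf{x},\mathbf{1}\rangle=1\}$, $\mathcal{T}=\mathcal{P}\cap A$. If the spectral locus is convex, then for any $a<b$ in $[0,1]$, \[ \operatorname{conv}\bigl(\eta([a,b]_{\mathbb{T}})\bigr)\cap\operatorname{conv}\bigl(\eta([b,a]_{\mathbb{T}})\bigr)=[\eta(a),\eta(b)]. \]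
   Context: $[\mathbf{x},\mathbf{y}]$ denotes the closed segment between $\mathbf{x}$ and $\mathbf{y}$. $\mathcal{T}$ is regarded as a subset of the plane $A$ with its relative topology. Fix a direction and orientation in $A$; $\angle(\mathbf{c}',\mathbf{c})$ is the angle from $\mathbf{c}$ to $\mathbf{c}'$. A closed cyclic interval $[a,b]_{\mathbb{T}}\subset[0,1]$ is $[a,b]$ if $a\le b$ and $[a,1]\cup[0,b]$ if $a>b$. The spectral locus $\eta([0,1])$ is convex if $\eta([0,1])\subset\partial\mathcal{T}$ and for every $\mathbf{c}\in\operatorname{int}\mathcal{T}$ a continuous version of $\lambda\mapsto\angle(\eta(\lambda),\mathbf{c})$ is monotone on $[0,1]$ with $|\angle(\eta(0),\mathbf{c})-\angle(\eta(1),\mathbf{c})|\le 2\pi$. *)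

From HB Require Import structures.
From mathcomp Require Import all_boot all_order all_algebra.
From mathcomp Require Import all_classical all_reals all_analysis.
Set Implicit Arguments. Unset Strict Implicit. Unset Printing Implicit Defensive.
Import Order.TTheory GRing.Theory Num.Theory numFieldNormedType.Exports.
Local Open Scope classical_set_scope.
Local Open Scope ring_scope.

Definition vec (R : realType) := 'I_3 -> R.

Section Defs.
Variable R : realType.

Definition vadd (x y : vec R) : vec R := fun i => x i + y i.
Definition vscale (t : R) (x : vec R) : vec R := fun i => t * x i.
Definition vsub (x y : vec R) : vec R := fun i => x i - y i.
Definition vsum1 (x : vec R) : R := \sum_(i < 3) x i.
Definition vnorm (x : vec R) : R := Num.sqrt (\sum_(i < 3) x i ^+ 2).
Definition vdist (x y : vec R) : R := vnorm (vsub x y).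

Definition planeA : set (vec R) := [set x | vsum1 x = 1].

Definition Lam : set R := [set t | 0 < t].

Definition coneP (chi : 'I_3 -> R -> R) : set (vec R) :=
  [set p | exists nu : {measure set R -> \bar R},
     (nu Lam < +oo)%E /\
     forall i, p i = fine (\int[nu]_(t in Lam) (chi i t)%:E)].

Definition regT (chi : 'I_3 -> R -> R) : set (vec R) := coneP chi `&` planeA.

Definition interior3 (S : set (vec R)) : set (vec R) :=
  [set x | exists2 e : R, 0 < e & forall y, vdist y x < e -> S y].

Definition relint (S : set (vec R)) : set (vec R) :=
  [set x | planeA x /\ S x /\
     exists2 e : R, 0 < e & forall y, planeA y -> vdist y x < e -> S y].
Definition relclosure (S : set (vec R)) : set (vec R) :=
  [set x | planeA x /\ forall e : R, 0 < e -> exists2 y, S y & vdist y x < e].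
Definition relboundary (S : set (vec R)) : set (vec R) :=
  relclosure S `\` relint S.

(* fixed oriented orthonormal basis of the direction plane {<x,1> = 0} *)
Definition e1 : vec R := fun i =>
  [:: 1 / Num.sqrt 2; -1 / Num.sqrt 2; 0]`_i.
Definition e2 : vec R := fun i =>
  [:: 1 / Num.sqrt 6; 1 / Num.sqrt 6; -2 / Num.sqrt 6]`_i.

(* theta is a continuous version of lambda |-> angle(eta(lambda), c) on [0,1] *)
Definition angle_version (eta : 'I_3 -> R -> R) (c : vec R) (theta : R -> R) :=
  {within `[0, 1], continuous theta} /\
  forall l, l \in `[0, 1] ->
    exists2 r : R, 0 < r &
      forall i, eta i l - c i = r * (cos (theta l) * e1 i + sin (theta l) * e2 i).

Definition monotone_on01 (f : R -> R) :=
  {in `[0, 1] &, forall x y, x <= y -> f x <= f y} \/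
  {in `[0, 1] &, forall x y, x <= y -> f y <= f x}.

Definition convex_locus (eta : 'I_3 -> R -> R) (T : set (vec R)) :=
  (forall l, l \in `[0, 1] -> relboundary T (fun i => eta i l)) /\
  forall c, relint T c ->
    exists theta, angle_version eta c theta /\ monotone_on01 theta /\
      `|theta 0 - theta 1| <= 2 * pi.

Definition cyc_interval (a b : R) : set R :=
  if a <= b then `[a, b]%classic else (`[a, 1] `|` `[0, b])%classic.

Definition convhull (S : set (vec R)) : set (vec R) :=
  [set x | exists n (w : 'I_n -> R) (p : 'I_n -> vec R),
     (forall k, 0 <= w k) /\ \sum_(k < n) w k = 1 /\ (forall k, S (p k)) /\
     forall i, x i = \sum_(k < n) w k * p k i].

Definition segment (x y : vec R) : set (vec R) :=
  [set z | exists2 t : R, t \in `[0, 1] & forall i, z i = (1 - t) * x i + t * y i].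

Definition curve_image (eta : 'I_3 -> R -> R) (I : set R) : set (vec R) :=
  [set x | exists2 l, I l & x = (fun i => eta i l)].

End Defs.

From mathcomp Require Import all_boot all_order all_algebra.
From mathcomp Require Import all_classical all_reals all_analysis.
From mathcomp Require Import ring lra measurable_realfun.
Set Implicit Arguments.
Unset Strict Implicit.
Unset Printing Implicit Defensive.
Import Order.TTheory GRing.Theory Num.Theory numFieldNormedType.Exports.
Local Open Scope classical_set_scope.
Local Open Scope ring_scope.

(* Put the origin of the plane A at a relative interior point c
   of T.  Convexity of the locus says that, seen from c, eta(l) has polar
   coordinates (rho l, phi l) with phi monotone and turning by at most 2 pi;
   since every eta(l) lies on the relative boundary of the convex set T, no
   point of the curve lies in a triangle (c, eta l1, eta l2) off the chord
   [eta l1, eta l2].  For three curve points in angular order this forces a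
   nonnegative signed area, so the affine map z |-> area(eta a, eta b, z) is
   <= 0 on eta([a, b]) and >= 0 on the complementary arc.  A common point of
   the two hulls thus has area 0 with all its weight on curve points of the line
   through eta a and eta b, and on the arc of angular width at most pi these lie
   on the chord [eta a, eta b]. *)

(** * Polar geometry in the plane *)

Section SineSign.
Variable R : realType.
Implicit Types x : R.

Lemma sin_lt0_gt_pi x : 0 <= x -> sin x < 0 -> pi < x.
Proof.
move=> x0 sx; rewrite ltNge; apply/negP => xpi.
by have := @sin_ge0_pi R x; rewrite x0 xpi => /(_ isT); lra.
Qed.

Lemma sin_eq0_0pi x : 0 <= x <= pi -> sin x = 0 -> x = 0 \/ x = pi.
Proof.
move=> /andP[x0 xpi] sx.
have [x_gt0|] := ltP 0 x; last by left; lra.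
have [x_ltpi|] := ltP x pi; last by right; lra.
by have := @sin_gt0_pi R x; rewrite x_gt0 x_ltpi => /(_ isT); lra.
Qed.

End SineSign.

Section PlaneGeometry.
Variable R : realType.
Implicit Types (p q z : R * R) (rho theta : R).

(* [ring] does not see through the action of [R] on itself. *)
Lemma scaleRE (a x : R) : a *: x = a * x.
Proof. by []. Qed.

Definition cross p q := p.1 * q.2 - p.2 * q.1.

(* twice the signed area of the triangle (p, q, z) *)
Definition area p q z := cross p q + cross q z + cross z p.

Definition polar rho theta : R * R := (rho * cos theta, rho * sin theta).

Definition below_chord p q z :=
  exists mu nu, [/\ 0 <= mu, 0 <= nu, mu + nu < 1 & z = mu *: p + nu *: q].

Definition exposed (S : set (R * R)) :=
  forall p q z, S p -> S q -> S z -> ~ below_chord p q z.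

Definition on_segment p q z := exists2 t, 0 <= t <= 1 & z = (1 - t) *: p + t *: q.

Lemma areaC p q z : area p q z = area q z p.
Proof. by rewrite /area; ring. Qed.

Lemma area_swap p q z : area p q z = - area p z q.
Proof. by rewrite /area /cross; ring. Qed.

Lemma polarD2pi rho theta : polar rho (theta + 2 * pi) = polar rho theta.
Proof. by rewrite /polar mulr_natl sinD2pi cosD2pi. Qed.

Lemma cross_polar r1 r2 t1 t2 :
  cross (polar r1 t1) (polar r2 t2) = r1 * r2 * sin (t2 - t1).
Proof. by rewrite /cross /= sinB; ring. Qed.

Lemma cross_dependence p q z :
  cross q z *: p + cross z p *: q + cross p q *: z = 0.
Proof. by apply: injective_projections; rewrite /cross /= !scaleRE; ring. Qed.

Lemma on_segment_left p q : on_segment p q p.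
Proof.
exists 0; first by rewrite lexx ler01.
by rewrite subr0 scale1r scale0r addr0.
Qed.

Lemma on_segment_right p q : on_segment p q q.
Proof.
exists 1; first by rewrite lexx ler01.
by rewrite subrr scale0r scale1r add0r.
Qed.

Lemma on_segmentC p q z : on_segment p q z -> on_segment q p z.
Proof.
move=> [t t01 ->]; exists (1 - t); first lra.
by rewrite addrC; congr (_ *: _ + _); ring.
Qed.

Lemma below_chord_of_area_lt0 p q z :
  area p q z < 0 -> 0 <= cross q z -> 0 <= cross z p -> below_chord p q z.
Proof.
move=> neg cqz czp; have cpq : cross p q < 0 by move: neg; rewrite /area; lra.
have cpq0 : cross p q != 0 by rewrite lt_eqF.
exists (- cross q z / cross p q), (- cross z p / cross p q); split.
- by apply: mulr_le0; [rewrite oppr_le0 | rewrite invr_le0 ltW].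
- by apply: mulr_le0; [rewrite oppr_le0 | rewrite invr_le0 ltW].
- by rewrite -mulrDl ltr_ndivrMr // mul1r; move: neg; rewrite /area; lra.
have := cross_dependence p q z => dep.
have /= := congr1 fst dep; have /= := congr1 snd dep; rewrite !scaleRE => e2 e1.
apply: injective_projections; rewrite /= !scaleRE; apply: (mulfI cpq0).
  by rewrite [LHS](_ : _ = - (cross q z * p.1 + cross z p * q.1)); [field | lra].
by rewrite [LHS](_ : _ = - (cross q z * p.2 + cross z p * q.2)); [field | lra].
Qed.

Lemma on_segment_of_cross p q z :
  0 < cross p z -> 0 <= cross p q -> 0 <= cross q z -> area p q z = 0 ->
  on_segment p z q.
Proof.
move=> cpz cpq cqz area0; have cpz0 : cross p z != 0 by rewrite gt_eqF.
have czp : cross z p = - cross p z by rewrite /cross; ring.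
have cqzE : cross q z = cross p z - cross p q by move: area0; rewrite /area czp; lra.
exists (cross p q / cross p z); first by rewrite divr_ge0 ?ler_pdivrMr ?mul1r //; lra.
have dep := cross_dependence p q z; rewrite czp cqzE in dep.
have /= := congr1 fst dep; have /= := congr1 snd dep; rewrite !scaleRE => e2 e1.
apply: injective_projections; rewrite /= !scaleRE; apply: (mulfI cpz0).
  rewrite [LHS](_ : _ = (cross p z - cross p q) * p.1 + cross p q * z.1); first by field.
  by lra.
rewrite [LHS](_ : _ = (cross p z - cross p q) * p.2 + cross p q * z.2); first by field.
by lra.
Qed.

Lemma polar_same_ray {S : set (R * R)} {r1 r2 theta} :
  exposed S -> S (polar r1 theta) -> S (polar r2 theta) -> 0 < r1 -> 0 < r2 ->
  polar r1 theta = polar r2 theta.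
Proof.
move=> expS S1 S2 r1_gt0 r2_gt0.
have inner r r' : S (polar r theta) -> S (polar r' theta) -> 0 < r -> r < r' -> False.
  move=> Sr Sr' r_gt0 rr'; have r'_gt0 : 0 < r' by lra.
  apply: (expS _ _ _ Sr' Sr' Sr); exists (r / r'), 0; split.
  - by rewrite divr_ge0 ?ltW.
  - by [].
  - by rewrite addr0 ltr_pdivrMr // mul1r.
  rewrite scale0r addr0; apply: injective_projections; rewrite /= !scaleRE.
    by field; lra.
  by field; lra.
by case: (ltgtP r1 r2) => [/(inner _ _ S1 S2 r1_gt0)|/(inner _ _ S2 S1 r2_gt0)|->].
Qed.

Lemma cross_polar_lt0 {r1 r2 t1 t2} : 0 < r1 -> 0 < r2 -> t1 <= t2 ->
  cross (polar r1 t1) (polar r2 t2) < 0 -> pi < t2 - t1.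
Proof.
move=> r1_gt0 r2_gt0 t12; rewrite cross_polar pmulr_rlt0 ?mulr_gt0 //.
by apply: sin_lt0_gt_pi; lra.
Qed.

Lemma cross_polar_ge0 r1 r2 t1 t2 : 0 < r1 -> 0 < r2 -> t1 <= t2 <= t1 + pi ->
  0 <= cross (polar r1 t1) (polar r2 t2).
Proof.
move=> r1_gt0 r2_gt0 /andP[t12 t21]; rewrite cross_polar pmulr_rge0 ?mulr_gt0 //.
by apply: sin_ge0_pi; apply/andP; split; lra.
Qed.

(* Among the three turns t2 - t1, t3 - t2, t1 + 2 pi - t3, which add up to 2 pi,
   at most one exceeds pi; so if the area were negative, exactly one cross
   product would be negative and the corresponding vertex would be below the
   chord of the other two. *)
Lemma area_polar_ge0 (S : set (R * R)) r1 r2 r3 t1 t2 t3 :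
  exposed S -> S (polar r1 t1) -> S (polar r2 t2) -> S (polar r3 t3) ->
  0 < r1 -> 0 < r2 -> 0 < r3 -> t1 <= t2 -> t2 <= t3 -> t3 <= t1 + 2 * pi ->
  0 <= area (polar r1 t1) (polar r2 t2) (polar r3 t3).
Proof.
move=> expS S1 S2 S3 r1_gt0 r2_gt0 r3_gt0 t12 t23 t31.
have c12 := cross_polar_lt0 r1_gt0 r2_gt0 t12.
have c23 := cross_polar_lt0 r2_gt0 r3_gt0 t23.
have c31 : cross (polar r3 t3) (polar r1 t1) < 0 -> pi < t1 + 2 * pi - t3.
  by rewrite -(polarD2pi r1 t1); apply: cross_polar_lt0 => //; lra.
rewrite leNgt; apply/negP => neg.
have [n12|p12] := ltP (cross (polar r1 t1) (polar r2 t2)) 0.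
  apply: (expS _ _ _ S1 S2 S3); apply: below_chord_of_area_lt0 => //.
    by rewrite leNgt; apply/negP => /c23; have := c12 n12; lra.
  by rewrite leNgt; apply/negP => /c31; have := c12 n12; lra.
have [n23|p23] := ltP (cross (polar r2 t2) (polar r3 t3)) 0.
  apply: (expS _ _ _ S2 S3 S1); apply: below_chord_of_area_lt0 => //.
    by rewrite -areaC.
  by rewrite leNgt; apply/negP => /c31; have := c23 n23; lra.
apply: (expS _ _ _ S3 S1 S2); apply: below_chord_of_area_lt0 => //.
by rewrite areaC.
Qed.

Lemma collinear_polar_on_segment (S : set (R * R)) r1 r2 r3 t1 t2 t3 :
  exposed S -> S (polar r1 t1) -> S (polar r2 t2) -> S (polar r3 t3) ->
  0 < r1 -> 0 < r2 -> 0 < r3 -> t1 <= t2 -> t2 <= t3 -> t3 <= t1 + pi ->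
  area (polar r1 t1) (polar r2 t2) (polar r3 t3) = 0 ->
  on_segment (polar r1 t1) (polar r3 t3) (polar r2 t2).
Proof.
move=> expS S1 S2 S3 r1_gt0 r2_gt0 r3_gt0 t12 t23 t31 area0.
set p1 := polar r1 t1; set p2 := polar r2 t2; set p3 := polar r3 t3.
have c12 : 0 <= cross p1 p2 by apply: cross_polar_ge0 => //; lra.
have c23 : 0 <= cross p2 p3 by apply: cross_polar_ge0 => //; lra.
have c13 : cross p1 p3 = cross p1 p2 + cross p2 p3.
  by move: area0; rewrite /area /cross; lra.
have [c13_gt0|c13_le0] := ltP 0 (cross p1 p3).
  exact: on_segment_of_cross.
have : sin (t2 - t1) = 0.
  have /eqP : cross p1 p2 = 0 by lra.
  by rewrite /p1 /p2 cross_polar !mulf_eq0 (gt_eqF r1_gt0) (gt_eqF r2_gt0) => /eqP.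
move=> /sin_eq0_0pi [|t21|t21]; first by apply/andP; split; lra.
  have t21' : t2 = t1 by lra.
  have -> : p2 = p1.
    by rewrite /p2 /p1 t21'; apply: (polar_same_ray expS); rewrite // -t21'.
  exact: on_segment_left.
have t32 : t3 = t2 by lra.
have -> : p2 = p3 by rewrite /p2 /p3 -t32; apply: (polar_same_ray expS); rewrite // t32.
exact: on_segment_right.
Qed.

End PlaneGeometry.

Section Barycentres.
Variable R : realType.
Implicit Types (p q : R * R).

Lemma fst_bary n (w : 'I_n -> R) (z : 'I_n -> R * R) :
  (\sum_(k < n) w k *: z k).1 = \sum_(k < n) w k * (z k).1.
Proof. exact: (big_morph fst (id1 := 0) (op1 := +%R)). Qed.

Lemma snd_bary n (w : 'I_n -> R) (z : 'I_n -> R * R) :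
  (\sum_(k < n) w k *: z k).2 = \sum_(k < n) w k * (z k).2.
Proof. exact: (big_morph snd (id1 := 0) (op1 := +%R)). Qed.

Lemma areaE p q z : area p q z = cross p q + (p.2 - q.2) * z.1 + (q.1 - p.1) * z.2.
Proof. by rewrite /area /cross; ring. Qed.

Lemma area_bary p q n (w : 'I_n -> R) (z : 'I_n -> R * R) :
  \sum_(k < n) w k = 1 ->
  area p q (\sum_(k < n) w k *: z k) = \sum_(k < n) w k * area p q (z k).
Proof.
move=> w1; rewrite areaE fst_bary snd_bary.
rewrite [RHS](eq_bigr (fun k => cross p q * w k + (p.2 - q.2) * (w k * (z k).1)
                            + (q.1 - p.1) * (w k * (z k).2))); last first.
  by move=> k _; rewrite areaE; ring.
by rewrite !big_split /= -!mulr_sumr w1 mulr1.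
Qed.

Lemma on_segment_bary p q n (w : 'I_n -> R) (z : 'I_n -> R * R) :
  (forall k, 0 <= w k) -> \sum_(k < n) w k = 1 ->
  (forall k, w k != 0 -> on_segment p q (z k)) ->
  on_segment p q (\sum_(k < n) w k *: z k).
Proof.
move=> w_ge0 w1 zseg.
have [t t01 wzE] : exists2 t : 'I_n -> R, forall k, 0 <= t k <= 1 &
    forall k, w k *: z k = (w k * (1 - t k)) *: p + (w k * t k) *: q.
  suff /choice[t tP] : forall k, exists t : R, 0 <= t <= 1 /\ w k *: z k = (w k * (1 - t)) *: p + (w k * t) *: q.
    by exists t => k; have [] := tP k.
  move=> k; have [/eqP->|/zseg[t t01 ->]] := boolP (w k == 0).
    by exists 0; rewrite lexx ler01 !mul0r !scale0r addr0.
  by exists t; rewrite scalerDr !scalerA.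
exists (\sum_(k < n) w k * t k).
  apply/andP; split.
    by apply: sumr_ge0 => k _; rewrite mulr_ge0 //; have /andP[] := t01 k.
  rewrite -w1; apply: ler_sum => k _.
  by rewrite -[leRHS]mulr1 ler_wpM2l //; have /andP[] := t01 k.
under eq_bigr do rewrite wzE.
rewrite big_split /= -!scaler_suml; congr (_ *: _ + _).
rewrite (eq_bigr (fun k => w k - w k * t k)); last by move=> k _; ring.
by rewrite sumrB w1.
Qed.

Lemma weighted_sum_eq0 n (w F : 'I_n -> R) :
  (forall k, 0 <= w k) -> (forall k, 0 <= F k) -> \sum_(k < n) w k * F k = 0 ->
  forall k, w k != 0 -> F k = 0.
Proof.
move=> w_ge0 coarc_ge0 /psumr_eq0P sum0 k wk.
have /eqP := sum0 (fun k _ => mulr_ge0 (w_ge0 k) (coarc_ge0 k)) k isT.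
by rewrite mulf_eq0 (negbTE wk) => /eqP.
Qed.

Definition planar_hull (P : R -> R * R) (I : set R) (z : R * R) :=
  exists n (w l : 'I_n -> R), [/\ forall k, 0 <= w k, \sum_(k < n) w k = 1,
    forall k, I (l k) & z = \sum_(k < n) w k *: P (l k)].

End Barycentres.

(** * Separation of the two arcs *)

Lemma cyc_interval_le (R : realType) (a b : R) :
  a <= b -> cyc_interval a b = [set l | a <= l <= b].
Proof.
by move=> ab; rewrite /cyc_interval ab; apply/seteqP; split => l; rewrite /= in_itv.
Qed.

Lemma cyc_interval_gt (R : realType) (a b : R) :
  a < b -> cyc_interval b a = [set l | b <= l <= 1 \/ 0 <= l <= a].
Proof.
move=> ab; rewrite /cyc_interval leNgt ab /=.
by apply/seteqP; split => l; rewrite /= !in_itv.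
Qed.

Lemma cyc_interval_sub01 (R : realType) (a b l : R) : 0 <= a <= 1 -> 0 <= b <= 1 ->
  cyc_interval a b l -> 0 <= l <= 1.
Proof.
move=> /andP[a0 a1] /andP[b0 b1]; rewrite /cyc_interval.
by case: ifP => _ /=; [|case]; rewrite in_itv /= => /andP[? ?]; apply/andP; split; lra.
Qed.

Lemma cyc_interval_endpoints (R : realType) (a b : R) : 0 <= a <= 1 -> 0 <= b <= 1 ->
  cyc_interval a b a /\ cyc_interval a b b.
Proof.
move=> /andP[a0 a1] /andP[b0 b1]; rewrite /cyc_interval.
case: ifP => ab; first by split; rewrite /= in_itv /= lexx ab.
by split; [left | right]; rewrite /= in_itv /= lexx ?a1 ?b0.
Qed.

Section ArcSeparation.
Variables (R : realType) (rho phi : R -> R) (a b : R).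
Hypothesis rho_gt0 : forall l : R, 0 <= l -> l <= 1 -> 0 < rho l.
Hypothesis phi_mono : forall l l' : R, 0 <= l -> l <= l' -> l' <= 1 -> phi l <= phi l'.
Hypothesis phi_turn : phi 1 <= phi 0 + 2 * pi.
Let P l := polar (rho l) (phi l).
Hypothesis P_exposed : exposed (P @` `[0, 1]).
Hypotheses (a_ge0 : 0 <= a) (ab : a < b) (b_le1 : b <= 1).

Let on_curve l : 0 <= l -> l <= 1 -> (P @` `[0, 1]) (polar (rho l) (phi l)).
Proof. by move=> l0 l1; exists l; rewrite //= in_itv /= l0 l1. Qed.

Let on_curveD2pi l : 0 <= l -> l <= 1 ->
  (P @` `[0, 1]) (polar (rho l) (phi l + 2 * pi)).
Proof. by rewrite polarD2pi; exact: on_curve. Qed.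

Let phi_ab : [/\ phi 0 <= phi a, phi a <= phi b & phi b <= phi 1].
Proof.
by split; apply: phi_mono; have := a_ge0; have := ab; have := b_le1; lra.
Qed.

(* [lra] ignores the section hypotheses, so they are passed explicitly. *)
Local Ltac lra_ab :=
  have := a_ge0; have := ab; have := b_le1; have := phi_turn;
  case: phi_ab; lra.

Local Ltac curve_side :=
  solve [ apply: on_curve; lra_ab | apply: on_curveD2pi; lra_ab
        | apply: rho_gt0; lra_ab | lra_ab ].

Lemma arc_area_le0 l : a <= l <= b -> area (P a) (P b) (P l) <= 0.
Proof.
move=> /andP[al lb]; have : phi a <= phi l <= phi b by rewrite !phi_mono //; lra_ab.
move=> /andP[? ?]; rewrite area_swap oppr_le0.
by apply: (area_polar_ge0 P_exposed); curve_side.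
Qed.

Lemma coarc_area_ge0 l : b <= l <= 1 \/ 0 <= l <= a -> 0 <= area (P a) (P b) (P l).
Proof.
case=> /andP[l1 l2].
  have : phi b <= phi l <= phi 1 by rewrite !phi_mono //; lra_ab.
  by move=> /andP[? ?]; apply: (area_polar_ge0 P_exposed); curve_side.
have : phi 0 <= phi l <= phi a by rewrite !phi_mono //; lra_ab.
move=> /andP[? ?]; rewrite /P -(polarD2pi (rho l)).
by apply: (area_polar_ge0 P_exposed); curve_side.
Qed.

(* One of the two arcs spans an angle at most pi; on it, the curve meets the
   line through P a and P b only inside the chord. *)
Lemma collinear_on_segment :
  (forall l, a <= l <= b -> area (P a) (P b) (P l) = 0 -> on_segment (P a) (P b) (P l)) \/
  (forall l, b <= l <= 1 \/ 0 <= l <= a -> area (P a) (P b) (P l) = 0 ->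
     on_segment (P a) (P b) (P l)).
Proof.
have [narrow|wide] := leP (phi b) (phi a + pi).
  left => l /andP[al lb] area0.
  have : phi a <= phi l <= phi b by rewrite !phi_mono //; lra_ab.
  move=> /andP[? ?]; apply: (collinear_polar_on_segment P_exposed); try curve_side.
  by rewrite area_swap area0 oppr0.
right => l l_arc area0; apply: on_segmentC; rewrite /P -(polarD2pi (rho a)).
have area0' : area (P b) (P l) (polar (rho a) (phi a + 2 * pi)) = 0.
  by rewrite polarD2pi -areaC.
case: l_arc area0' => /andP[l1 l2] area0'.
  have : phi b <= phi l <= phi 1 by rewrite !phi_mono //; lra_ab.
  by move=> /andP[? ?]; apply: (collinear_polar_on_segment P_exposed); try curve_side.
have : phi 0 <= phi l <= phi a by rewrite !phi_mono //; lra_ab.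
move=> /andP[? ?]; rewrite /P -(polarD2pi (rho l)) in area0' *.
by apply: (collinear_polar_on_segment P_exposed); try curve_side.
Qed.

Theorem planar_hulls_meet_in_segment z :
  planar_hull P (cyc_interval a b) z -> planar_hull P (cyc_interval b a) z ->
  on_segment (P a) (P b) z.
Proof.
rewrite cyc_interval_le ?ltW // cyc_interval_gt //.
move=> [n [w [l [w_ge0 w1 arc zE]]]] [m [v [l' [v_ge0 v1 coarc zE']]]].
have arc_le0 k : 0 <= - area (P a) (P b) (P (l k)) by rewrite oppr_ge0 arc_area_le0 //; exact: arc.
have coarc_ge0 k : 0 <= area (P a) (P b) (P (l' k)) by rewrite coarc_area_ge0 //; exact: coarc.
have z_le0 : area (P a) (P b) z <= 0.
  by rewrite zE area_bary //; apply: sumr_le0 => k _; rewrite mulr_ge0_le0 // -oppr_ge0.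
have z_ge0 : 0 <= area (P a) (P b) z.
  by rewrite zE' area_bary //; apply: sumr_ge0 => k _; rewrite mulr_ge0.
have z_area0 : area (P a) (P b) z = 0 by apply/eqP; rewrite eq_le z_le0 z_ge0.
case: collinear_on_segment => seg.
  rewrite zE; apply: on_segment_bary => // k wk; apply: seg; first exact: arc.
  apply/eqP; rewrite -oppr_eq0; apply/eqP; apply: (weighted_sum_eq0 w_ge0 arc_le0) wk.
  under eq_bigr do rewrite mulrN.
  by rewrite sumrN -area_bary // -zE z_area0 oppr0.
rewrite zE'; apply: on_segment_bary => // k vk; apply: seg; first exact: coarc.
by apply: (weighted_sum_eq0 v_ge0 coarc_ge0) vk; rewrite -area_bary // -zE'.
Qed.

End ArcSeparation.

(** * Cones and relative interiors in the plane A *)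

Definition o0 : 'I_3 := @Ordinal 3 0 isT.
Definition o1 : 'I_3 := @Ordinal 3 1 isT.
Definition o2 : 'I_3 := @Ordinal 3 2 isT.

Lemma ord3P (i : 'I_3) : [\/ i = o0, i = o1 | i = o2].
Proof. by case: i => [[|[|[|//]]] i3]; [constructor 1|constructor 2|constructor 3]; apply/val_inj. Qed.

Lemma sum3 (R : realType) (f : 'I_3 -> R) : \sum_(i < 3) f i = f o0 + f o1 + f o2.
Proof. by rewrite !big_ord_recl big_ord0 addr0 addrA; congr (f _ + f _ + f _); apply/val_inj. Qed.

Section RelativeInterior.
Variable R : realType.
Implicit Types (x y z c p q : vec R) (S : set (vec R)) (e : R).

Definition conic (S : set (vec R)) :=
  forall p q (k1 k2 : R), 0 <= k1 -> 0 <= k2 -> S p -> S q ->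
    S (fun i => k1 * p i + k2 * q i).

Lemma vdist_ltE x y e : 0 < e ->
  (vdist y x < e) = (\sum_(i < 3) (y i - x i) ^+ 2 < e ^+ 2).
Proof.
move=> e_gt0; rewrite /vdist /vnorm /vsub -{1}(ger0_norm (ltW e_gt0)) -sqrtr_sqr.
by rewrite ltr_sqrt // exprn_gt0.
Qed.

Lemma vdist_coord_lt x y e : vdist y x < e -> forall i, `|y i - x i| < e.
Proof.
move=> dxy i; have e_gt0 : 0 < e by apply: le_lt_trans dxy; exact: sqrtr_ge0.
move: dxy; rewrite vdist_ltE // sum3 => dxy.
have := sqr_ge0 (y o0 - x o0); have := sqr_ge0 (y o1 - x o1).
have := sqr_ge0 (y o2 - x o2) => ? ? ?.
have : (y i - x i) ^+ 2 < e ^+ 2 by case: (ord3P i) => ->; lra.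
by rewrite -ltr_sqrt ?exprn_gt0 // !sqrtr_sqr (gtr0_norm e_gt0).
Qed.

Lemma coord_le_vdist x y e : 0 < e -> (forall i, `|y i - x i| <= e / 2) -> vdist y x < e.
Proof.
move=> e_gt0 close; rewrite vdist_ltE // sum3.
have sq i : (y i - x i) ^+ 2 <= e ^+ 2 / 4.
  by have := close i; rewrite ler_norml => /andP[? ?]; nra.
by have := sq o0; have := sq o1; have := sq o2; nra.
Qed.

Lemma vdist_self x e : 0 < e -> vdist x x < e.
Proof. by move=> e_gt0; apply: coord_le_vdist => // i; rewrite subrr normr0 divr_ge0 ?ltW. Qed.

Lemma vdist_coord_scale x y (k e : R) i :
  0 <= k <= 1 -> vdist y x < e -> `|k * (y i - x i)| <= e.
Proof.
move=> /andP[k_ge0 k_le1] dxy; rewrite normrM ger0_norm // -[e]mul1r.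
by rewrite ler_pM ?normr_ge0 // ltW // vdist_coord_lt.
Qed.

Lemma vsum1_comb3 (a b d : R) x y z :
  vsum1 (fun i => a * x i + b * y i + d * z i) = a * vsum1 x + b * vsum1 y + d * vsum1 z.
Proof. by rewrite /vsum1 !sum3; ring. Qed.

Lemma planeA_comb3 (a b d : R) x y z : planeA x -> planeA y -> planeA z ->
  a + b + d = 1 -> planeA (fun i => a * x i + b * y i + d * z i).
Proof. by rewrite /planeA /= vsum1_comb3 => -> -> ->; rewrite !mulr1. Qed.

Lemma conic_comb3 S (a b d : R) x y z : conic S -> S x -> S y -> S z ->
  0 <= a -> 0 <= b -> 0 <= d -> S (fun i => a * x i + b * y i + d * z i).
Proof.
move=> S_conic Sx Sy Sz a_ge0 b_ge0 d_ge0.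
have -> : (fun i => a * x i + b * y i + d * z i) =
    (fun i => 1 * (a * x i + b * y i) + d * z i) by apply/funext => i; rewrite mul1r.
by apply: (S_conic) => //; apply: (S_conic).
Qed.

(* For w near z, replace y1, y2 by points y1', y2' of the section within del
   and solve w = lam c' + mu y1' + nu y2' for c': it lies within
   3 del / lam < eps of c, hence in the section, and so does w. *)
Lemma relint_conic_comb S c y1 y2 (lam mu nu : R) : conic S ->
  relint (S `&` planeA (R:=R)) c -> relclosure (S `&` planeA (R:=R)) y1 ->
  relclosure (S `&` planeA (R:=R)) y2 ->
  0 < lam -> 0 <= mu -> 0 <= nu -> lam + mu + nu = 1 ->
  relint (S `&` planeA (R:=R)) (fun i => lam * c i + mu * y1 i + nu * y2 i).
Proof.
move=> S_conic [Ac [Sc [eps eps_gt0 ball_c]]] [Ay1 near1] [Ay2 near2] lam_gt0 mu_ge0 nu_ge0 sum1.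
set z := fun i => _.
have Az : planeA z by apply: planeA_comb3.
pose del := lam * eps / 8; have del_gt0 : 0 < del by rewrite divr_gt0 ?mulr_gt0.
have [y1' [Sy1' Ay1'] d1] := near1 del del_gt0.
have [y2' [Sy2' Ay2'] d2] := near2 del del_gt0.
have near_z w : planeA w -> vdist w z < del -> (S `&` planeA (R:=R)) w.
  move=> Aw dw; have lam_neq0 : lam != 0 by rewrite gt_eqF.
  pose c' i := lam^-1 * w i + (- mu / lam) * y1' i + (- nu / lam) * y2' i.
  have Ac' : planeA c'.
    by apply: planeA_comb3 => //; rewrite (_ : mu = 1 - lam - nu); [field | lra].
  have dc' : vdist c' c < eps.
    apply: coord_le_vdist => // i.
    have -> : c' i - c i =
        ((w i - z i) - mu * (y1' i - y1 i) - nu * (y2' i - y2 i)) / lam.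
      by rewrite /c' /z; field.
    have dz : `|w i - z i| <= del by rewrite ltW // vdist_coord_lt.
    have dy1 : `|mu * (y1' i - y1 i)| <= del by apply: vdist_coord_scale d1; rewrite mu_ge0 /=; lra.
    have dy2 : `|nu * (y2' i - y2 i)| <= del by apply: vdist_coord_scale d2; rewrite nu_ge0 /=; lra.
    rewrite normrM normfV (gtr0_norm lam_gt0) ler_pdivrMr //.
    apply: le_trans (ler_normB _ _) _; apply: le_trans (lerD (ler_normB _ _) (lexx _)) _.
    have : 3 * del <= eps / 2 * lam by have := mulr_gt0 lam_gt0 eps_gt0; rewrite /del; lra.
    lra.
  have Sc' : S c' by have [] := ball_c c' Ac' dc'.
  split => //; have -> : w = fun i => lam * c' i + mu * y1' i + nu * y2' i.
    by apply/funext => i; rewrite /c'; field.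
  exact: conic_comb3 (ltW lam_gt0) mu_ge0 nu_ge0.
split=> //; split; last by exists del.
by apply: near_z => //; exact: vdist_self.
Qed.

Lemma conic_scale S p (k : R) : conic S -> 0 <= k -> S p -> S (fun i => k * p i).
Proof.
move=> S_conic k_ge0 Sp; have := S_conic p p k 0 k_ge0 (lexx 0) Sp Sp.
by congr S; apply/funext => i; rewrite mul0r addr0.
Qed.

(* An interior point of a cone in the nonnegative orthant has positive
   coordinate sum; rescaled onto the plane it is a relative interior point. *)
Lemma relint_exists S : conic S -> (forall p, S p -> forall i, 0 <= p i) ->
  (exists x, interior3 S x) -> exists c, relint (S `&` planeA (R:=R)) c.
Proof.
move=> S_conic S_ge0 [x [e e_gt0 ball_x]].
have x_ge i : e / 4 <= x i.
  suff : 0 <= x i - e / 4 by lra.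
  apply: (S_ge0 (fun i => x i - e / 4)); apply: ball_x; apply: coord_le_vdist => // j.
  by rewrite addrAC subrr add0r normrN gtr0_norm ?divr_gt0 //; lra.
set s := vsum1 x; have s_gt0 : 0 < s.
  by rewrite /s /vsum1 sum3; have := x_ge o0; have := x_ge o1; have := x_ge o2; lra.
have s_ge0 : 0 <= s^-1 by rewrite invr_ge0 ltW.
have Ac : planeA (fun i => s^-1 * x i).
  by rewrite /planeA /= /vsum1 -mulr_sumr mulVf ?gt_eqF.
exists (fun i => s^-1 * x i); split => //; split.
  by split => //; apply: conic_scale => //; apply: (ball_x); exact: vdist_self.
exists (e / (2 * s)) => [|y Ay dy]; first by rewrite divr_gt0 ?mulr_gt0.
split => //; have -> : y = fun i => s^-1 * (s * y i) by apply/funext => i; field; lra.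
apply: conic_scale => //; apply: ball_x; apply: coord_le_vdist => // i.
rewrite (_ : s * y i - x i = s * (y i - s^-1 * x i)); last by field; lra.
rewrite normrM gtr0_norm // (_ : e / 2 = s * (e / (2 * s))); last by field; lra.
by rewrite ler_pM2l //; apply: ltW; exact: (vdist_coord_lt dy i).
Qed.

End RelativeInterior.

Section ConeOfMeasures.
Variable R : realType.

Lemma LamE : @Lam R = `]0, +oo[%classic.
Proof. by apply/seteqP; split => x; rewrite /= in_itv /= andbT. Qed.

Lemma measurable_Lam : measurable (@Lam R).
Proof. by rewrite LamE; exact: measurable_itv. Qed.

Lemma measurable_fun_Lam (f : R -> R) :
  {in `]0, +oo[, continuous f} -> measurable_fun (@Lam R) (EFin \o f).
Proof.
move=> f_cont; apply/measurable_EFinP.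
apply: open_continuous_measurable_fun; first by rewrite LamE; exact: rray_open.
by move=> x; rewrite inE /= => x_gt0; apply: f_cont; rewrite in_itv /= andbT.
Qed.

Lemma integral_Lam_fin_num (f : R -> R) (M : R) (nu : {measure set R -> \bar R}) :
  {in `]0, +oo[, continuous f} -> (forall t, 0 < t -> 0 <= f t) ->
  (forall t, 0 < t -> `|f t| <= M) -> (nu (@Lam R) < +oo)%E ->
  (\int[nu]_(t in @Lam R) (f t)%:E)%E \is a fin_num.
Proof.
move=> f_cont f_ge0 f_le nu_fin.
have M_ge0 : 0 <= M by apply: le_trans (f_le 1 ltr01); exact: normr_ge0.
rewrite ge0_fin_numE; last by apply: integral_ge0 => t t_gt0; rewrite lee_fin f_ge0.
apply: (@le_lt_trans _ _ (\int[nu]_(t in @Lam R) (cst M%:E t))%E).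
  apply: ge0_le_integral; first exact: measurable_Lam.
  - by move=> t t_gt0; rewrite lee_fin f_ge0.
  - exact: measurable_fun_Lam.
  - exact: measurable_cst.
  - by move=> t t_gt0; rewrite lee_fin (le_trans (ler_norm _)) ?f_le.
by rewrite integral_cst; [apply: lte_mul_pinfty; rewrite ?lee_fin | exact: measurable_Lam].
Qed.

Lemma coneP_conic (chi : 'I_3 -> R -> R) (M : R) :
  (forall i (t : R), 0 < t -> 0 <= chi i t) ->
  (forall i, {in `]0, +oo[, continuous (chi i)}) ->
  (forall i (t : R), 0 < t -> `|chi i t| <= M) ->
  conic (coneP chi).
Proof.
move=> chi_ge0 chi_cont chi_le p q k1 k2 k1_ge0 k2_ge0 [nu1 [nu1_fin pE]] [nu2 [nu2_fin qE]].
pose nu := measure_add (mscale (NngNum k1_ge0) nu1) (mscale (NngNum k2_ge0) nu2).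
exists nu; split.
  rewrite /nu /measure_add /= /msum 2!big_ord_recl /= big_ord0 adde0 /mscale /=.
  by apply: lte_add_pinfty; apply: lte_mul_pinfty.
have chi_ge0E i : forall t, @Lam R t -> (0 <= (chi i t)%:E)%E.
  by move=> t t_gt0; rewrite lee_fin chi_ge0.
have mchi i := measurable_fun_Lam (chi_cont i).
move=> i; rewrite ge0_integral_measure_add;
  try exact: measurable_Lam; try exact: mchi; try exact: chi_ge0E.
rewrite !ge0_integral_mscale; try exact: measurable_Lam; try exact: mchi; try exact: chi_ge0E.
have fin1 := integral_Lam_fin_num (chi_cont i) (chi_ge0 i) (chi_le i) nu1_fin.
have fin2 := integral_Lam_fin_num (chi_cont i) (chi_ge0 i) (chi_le i) nu2_fin.
by rewrite fineD ?fin_numM // !fineM // pE qE.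
Qed.

Lemma coneP_ge0 (chi : 'I_3 -> R -> R) :
  (forall i (t : R), 0 < t -> 0 <= chi i t) -> forall p, coneP chi p -> forall i, 0 <= p i.
Proof.
move=> chi_ge0 p [nu [_ pE]] i; rewrite pE; apply: fine_ge0.
by apply: integral_ge0 => t t_gt0; rewrite lee_fin chi_ge0.
Qed.

End ConeOfMeasures.

(** * Polar coordinates on the spectral locus *)

Section PlaneCoordinates.
Variable R : realType.
Implicit Types (c : vec R) (s : R) (p q z : R * R).

Definition lift c s z : vec R := fun i => c i + z.1 * e1 R i + s * z.2 * e2 R i.

Lemma e1_e2_free (u v : R) :
  (forall i, u * e1 R i + v * e2 R i = 0) -> u = 0 /\ v = 0.
Proof.
move=> uv0; have := uv0 o2; have := uv0 o0; rewrite /e1 /e2 /= => e0 e2.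
have s6 : -2 / Num.sqrt 6 != 0 :> R.
  by rewrite ltr0_neq0 // mulNr oppr_lt0 divr_gt0 ?sqrtr_gt0.
have s2 : 1 / Num.sqrt 2 != 0 :> R.
  by rewrite gt_eqF // divr_gt0 ?sqrtr_gt0.
have /eqP : v * (-2 / Num.sqrt 6) = 0 by rewrite -e2; ring.
rewrite mulf_eq0 (negbTE s6) orbF => /eqP v0; split => //.
have /eqP : u * (1 / Num.sqrt 2) = 0 by rewrite -e0 v0; ring.
by rewrite mulf_eq0 (negbTE s2) orbF => /eqP.
Qed.

Lemma lift_inj c s : s != 0 -> injective (lift c s).
Proof.
move=> s_neq0 p q pq.
have diff0 i : (p.1 - q.1) * e1 R i + (s * (p.2 - q.2)) * e2 R i = 0.
  by have := congr1 (fun x => x i) pq; rewrite /lift => e; lra.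
have [d1 d2] := e1_e2_free diff0.
apply: injective_projections; first lra.
by apply/eqP; rewrite -subr_eq0; move/eqP: d2; rewrite mulf_eq0 (negbTE s_neq0).
Qed.

Lemma lift_comb c s p q (mu nu : R) : lift c s (mu *: p + nu *: q) =
  (fun i => (1 - mu - nu) * c i + mu * lift c s p i + nu * lift c s q i).
Proof. by apply/funext => i; rewrite /lift /= !scaleRE; ring. Qed.

Lemma lift_bary c s n (w : 'I_n -> R) (z : 'I_n -> R * R) : \sum_(k < n) w k = 1 ->
  lift c s (\sum_(k < n) w k *: z k) = (fun i => \sum_(k < n) w k * lift c s (z k) i).
Proof.
move=> w1; apply/funext => i; rewrite /lift fst_bary snd_bary.
rewrite [RHS](eq_bigr (fun k => c i * w k + e1 R i * (w k * (z k).1)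
                            + s * e2 R i * (w k * (z k).2))); last by move=> k _; ring.
by rewrite !big_split /= -!mulr_sumr w1; ring.
Qed.

Lemma lift_segment c s p q z :
  on_segment p q z -> segment (lift c s p) (lift c s q) (lift c s z).
Proof.
move=> [t t01 ->]; exists t; first by rewrite in_itv.
by move=> i; rewrite /lift /= !scaleRE; ring.
Qed.

Lemma lift_polarN c rho theta :
  lift c 1 (polar rho theta) = lift c (-1) (polar rho (- theta)).
Proof. by apply/funext => i; rewrite /lift /= cosN sinN; ring. Qed.

Lemma convhull_curve_lift (eta : 'I_3 -> R -> R) (P : R -> R * R) c s (I : set R) x :
  (forall l, I l -> forall i, eta i l = lift c s (P l) i) ->
  convhull (curve_image eta I) x -> exists2 z, planar_hull P I z & x = lift c s z.
Proof.
move=> etaE [n [w [p [w_ge0 [w1 [p_curve xE]]]]]].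
have /choice[l lP] : forall k, exists l, I l /\ p k = lift c s (P l).
  move=> k; have [l Il ->] := p_curve k; exists l; split => //.
  by apply/funext => i; exact: etaE.
exists (\sum_(k < n) w k *: P (l k)); first by exists n, w, l; split => // k; case: (lP k).
by rewrite lift_bary //; apply/funext => i; rewrite xE; apply: eq_bigr => k _; case: (lP k) => _ ->.
Qed.

End PlaneCoordinates.

Lemma segment_sub_convhull (R : realType) (eta : 'I_3 -> R -> R) (I : set R) (a b : R) :
  I a -> I b -> segment (fun i => eta i a) (fun i => eta i b) `<=` convhull (curve_image eta I).
Proof.
move=> Ia Ib x [t t01 xE]; move: t01; rewrite in_itv /= => /andP[t0 t1].
exists 2, (fun k : 'I_2 => if k == ord0 then 1 - t else t),
  (fun k : 'I_2 => if k == ord0 then (fun i => eta i a) else (fun i => eta i b)).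
split; first by move=> k; case: ifP => _; lra.
split; first by rewrite !big_ord_recl big_ord0 /=; ring.
split; first by move=> k; case: ifP => _; [exists a | exists b].
by move=> i; rewrite !big_ord_recl big_ord0 /= xE; ring.
Qed.

Section LocusInPolarCoordinates.
Variables (R : realType) (eta : 'I_3 -> R -> R) (c : vec R).

Lemma angle_version_lift theta : angle_version eta c theta ->
  exists rho : R -> R, (forall l, 0 <= l -> l <= 1 -> 0 < rho l) /\
    forall l, 0 <= l -> l <= 1 -> forall i, eta i l = lift c 1 (polar (rho l) (theta l)) i.
Proof.
move=> [_ rep].
have /choice[rho rhoP] : forall l : R, exists rho : R, 0 <= l <= 1 -> 0 < rho /\
    forall i, eta i l - c i = rho * (cos (theta l) * e1 R i + sin (theta l) * e2 R i).
  move=> l; have [l01|_] := boolP (0 <= l <= 1); last by exists 1.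
  have /rep[rho rho_gt0 rhoE] : l \in `[0, 1] by rewrite in_itv.
  by exists rho.
exists rho; split => l l0 l1; have [] := rhoP l; rewrite ?l0 ?l1 // => _ rhoE.
by move=> i; rewrite /lift /= -[LHS](subrK (c i)) rhoE; ring.
Qed.

(* A nonincreasing angle function becomes nondecreasing after reflecting the
   plane, which is the sign [s = -1]. *)
Lemma convex_locus_polar T : convex_locus eta T -> relint T c ->
  exists s (rho phi : R -> R), [/\ s != 0,
    forall l l' : R, 0 <= l -> l <= l' -> l' <= 1 -> phi l <= phi l',
    phi 1 <= phi 0 + 2 * pi,
    forall l : R, 0 <= l -> l <= 1 -> 0 < rho l &
    forall l : R, 0 <= l -> l <= 1 ->
      forall i, eta i l = lift c s (polar (rho l) (phi l)) i].
Proof.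
move=> [_ angles] c_int; have [theta [version [mono turn]]] := angles c c_int.
have [rho [rho_gt0 etaE]] := angle_version_lift version.
have in01 l : 0 <= l -> l <= 1 -> l \in `[0, 1] by move=> l0 l1; rewrite in_itv /= l0 l1.
case: mono => mono.
  exists 1, rho, theta; split => //.
    by move=> l l' l0 ll' l'1; apply: mono => //; apply: in01; lra.
  by have := ler_norm (theta 1 - theta 0); rewrite distrC in turn; lra.
exists (-1), rho, (fun l => - theta l); split => //.
- by move=> l l' l0 ll' l'1; rewrite lerN2; apply: mono => //; apply: in01; lra.
- by have := ler_norm (theta 0 - theta 1); lra.
by move=> l l0 l1 i; rewrite etaE // lift_polarN.
Qed.

Lemma exposed_lift (S : set (vec R)) s (rho phi : R -> R) : conic S ->
  relint (S `&` planeA (R:=R)) c ->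
  (forall l : R, 0 <= l -> l <= 1 -> relboundary (S `&` planeA (R:=R)) (fun i => eta i l)) ->
  (forall l : R, 0 <= l -> l <= 1 ->
     forall i, eta i l = lift c s (polar (rho l) (phi l)) i) ->
  exposed ((fun l => polar (rho l) (phi l)) @` `[0, 1]).
Proof.
move=> S_conic c_int boundary etaE _ _ _ [l1 + <-] [l2 + <-] [l + <-].
rewrite /= !in_itv /= => /andP[l1_0 l1_1] /andP[l2_0 l2_1] /andP[l_0 l_1].
move=> [mu [nu [mu_ge0 nu_ge0 munu Pl]]].
have [_ not_int] := boundary l l_0 l_1; apply: not_int.
have -> : (fun i => eta i l) = (fun i => (1 - mu - nu) * c i + mu * eta i l1 + nu * eta i l2).
  by apply/funext => i; rewrite !etaE // Pl lift_comb.
apply: relint_conic_comb => //; try lra.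
  exact: (boundary l1 l1_0 l1_1).1.
exact: (boundary l2 l2_0 l2_1).1.
Qed.

End LocusInPolarCoordinates.

Theorem lemma3 (R : realType) (chi eta : 'I_3 -> R -> R)
  (chi_nneg : forall i (t : R), 0 < t -> 0 <= chi i t)
  (chi_cont : forall i, {in `]0, +oo[, continuous (chi i)})
  (chi_bdd : exists M : R, forall i (t : R), 0 < t -> `|chi i t| <= M)
  (chi_supp : closure [set t : R | 0 < t /\ exists i, chi i t != 0] = `[0, 1]%classic)
  (chi_nz : forall t : R, 0 < t < 1 -> exists i, chi i t != 0)
  (eta_def : forall i (t : R), 0 < t < 1 ->
     eta i t = chi i t / \sum_(j < 3) chi j t)
  (eta_cont : forall i, {within `[0, 1], continuous (eta i)})
  (P_int : exists x, interior3 (coneP chi) x)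
  (locus_convex : convex_locus eta (regT chi))
  (a b : R) (ha : a \in `[0, 1]) (hb : b \in `[0, 1]) (hab : a < b) :
  convhull (curve_image eta (cyc_interval a b)) `&`
    convhull (curve_image eta (cyc_interval b a))
  = segment (fun i => eta i a) (fun i => eta i b).
Proof.
have [M chi_le] := chi_bdd.
have cone := coneP_conic chi_nneg chi_cont chi_le.
have [c c_int] := relint_exists cone (coneP_ge0 chi_nneg) P_int.
have [s [rho [phi [s_neq0 phi_mono phi_turn rho_gt0 etaE]]]] :=
  convex_locus_polar locus_convex c_int.
have boundary (l : R) : 0 <= l -> l <= 1 -> relboundary (regT chi) (fun i => eta i l).
  by move=> l0 l1; apply: locus_convex.1; rewrite in_itv /= l0 l1.
have exposed_P := exposed_lift cone c_int boundary etaE.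
move: ha hb; rewrite !in_itv /= => a01 b01.
have /andP[a0 _] := a01; have /andP[_ b1] := b01.
have etaE_on (u v : R) : 0 <= u <= 1 -> 0 <= v <= 1 -> forall l, cyc_interval u v l ->
    forall i, eta i l = lift c s (polar (rho l) (phi l)) i.
  by move=> u01 v01 l /(cyc_interval_sub01 u01 v01) /andP[l0 l1]; exact: etaE.
have endpointE (l : R) : 0 <= l <= 1 -> (fun i => eta i l) = lift c s (polar (rho l) (phi l)).
  by move=> /andP[l0 l1]; apply/funext; exact: etaE.
apply/seteqP; split => [x [hull_ab hull_ba]|x].
  have [z1 z1_hull x_z1] := convhull_curve_lift (etaE_on _ _ a01 b01) hull_ab.
  have [z2 z2_hull x_z2] := convhull_curve_lift (etaE_on _ _ b01 a01) hull_ba.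
  have /(lift_inj s_neq0) z12 : lift c s z1 = lift c s z2 by rewrite -x_z1 -x_z2.
  rewrite x_z1 (endpointE _ a01) (endpointE _ b01); apply: lift_segment.
  by apply: planar_hulls_meet_in_segment => //; rewrite z12.
have [? ?] := cyc_interval_endpoints a01 b01; have [? ?] := cyc_interval_endpoints b01 a01.
by move=> seg_x; split; apply: (segment_sub_convhull _ _ seg_x).
Qed.
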